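(* Let $q$ be a prime power, $m\ge2$, $1\le k<n$, and let $X\in\mathbb{F}_{q^m}^{k \times (n-k)}$ be chosen uniformly at random. Then $$\Pr\big(\mathrm{rs}[\,I_k\mid X\,] \text{ is a generalized Gabidulin code}\big)\leq \sum_{\substack{0<s<m\\ \gcd(s,m)=1}}\Pr\big(X\in\mathcal G(s)\big) =\sum_{\substack{0<s<m\\ \gcd(s,m)=1}}\frac{|\mathcal G(s)|}{q^{mk(n-k)}} .$$
   Context: For $0<s<m$ with $\gcd(s,m)=1$, $\mathcal G(s):=\{X \in (\mathbb{F}_{q^m}\setminus \mathbb{F}_q)^{k\times (n-k)} \mid \mathrm{rk}(X^{(q^s)}-X)=1\}$, where $X^{(q^s)}$ is obtained by raising each entry of $X$ to the $q^s$-th power. $\mathrm{rs}$ denotes $\mathbb{F}_{q^m}$-row space. For $s$ coprime to $m$ and $g_1,\dots,g_n\in\mathbb{F}_{q^m}$ linearly independent over $\mathbb{F}_q$, the generalized Gabidulin code of dimension $k$ with parameter $s$ is the row space of the $k\times n$ matrix with $(i,j)$ entry $g_j^{q^{s(i-1)}}$; a generalized Gabidulin code is such a code for some such $s$ and $g_1,\dots,g_n$. *)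

From HB Require Import structures.
From mathcomp Require Import all_boot all_order all_algebra all_field.
From mathcomp Require Import boolp.
Set Implicit Arguments. Unset Strict Implicit. Unset Printing Implicit Defensive.
Import GRing.Theory.
Local Open Scope ring_scope.

Section Defs.
Variables (L : finFieldType) (q m : nat).
(* L plays the role of F_{q^m} (hypothesis #|L| = q^m in the theorem);
   F_q is its unique subfield of order q, i.e. {x | x^q = x}. *)

Definition inFq (x : L) : bool := x ^+ q == x.

Definition frobmx (s : nat) {r c : nat} (X : 'M[L]_(r, c)) : 'M[L]_(r, c) :=
  map_mx (fun x => x ^+ (q ^ s)) X.

Definition Gset (s k c : nat) : {set 'M[L]_(k, c)} :=
  [set X : 'M[L]_(k, c) | [forall i, forall j, ~~ inFq (X i j)]
                         && (\rank (frobmx s X - X) == 1%N)].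

Definition Fq_linindep (N : nat) (g : 'I_N -> L) : Prop :=
  forall c : 'I_N -> L, (forall j, inFq (c j)) ->
    \sum_(j < N) c j * g j = 0 -> forall j, c j = 0.

Definition gabmx (s k N : nat) (g : 'I_N -> L) : 'M[L]_(k, N) :=
  \matrix_(i < k, j < N) g j ^+ (q ^ (s * i)).

Definition is_gen_gabidulin (k N : nat) (C : 'M[L]_(k, N)) : Prop :=
  exists (s : nat) (g : 'I_N -> L),
    coprime s m /\ Fq_linindep g /\ (C == gabmx s k g)%MS.

Definition Pr {k c : nat} (A : {set 'M[L]_(k, c)}) : rat :=
  (#|A|%:R / #|{: 'M[L]_(k, c)}|%:R)%R.

End Defs.

(* Up to row space, a generalized Gabidulin code is generated by the Moore
   matrix G = (g_j^(q^(s i))) of F_q-independent g_j, and for s coprime to m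
   such Moore matrices are row-free.  If rs[I | X] = rs G, applying the
   q^s-Frobenius gives rs[I | X^(q^s)] = rs G^(q^s), so the sum of the two row
   spaces is that of the Moore matrix with k + 1 rows and has dimension k + 1;
   since [I X; I X^(q^s)] has rank k + rk(X^(q^s) - X), that last rank is 1.
   An entry X_ij in F_q would make row i of [I | X] a nonzero codeword
   vanishing, as a linearized polynomial, at k F_q-independent elements,
   contradicting row-freeness again.  Hence the event lies in the union of the
   G(s mod m), and the union bound gives the inequality. *)

From HB Require Import structures.
From mathcomp Require Import all_boot all_order all_algebra all_field.
From mathcomp Require Import boolp ring.
Import GRing.Theory Num.Theory.
Local Open Scope ring_scope.
Set Implicit Arguments. Unset Strict Implicit. Unset Printing Implicit Defensive.

Lemma mxrank_unit_mul (F : fieldType) m n (P : 'M[F]_m) (A : 'M[F]_(m, n)) :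
  P \in unitmx -> \rank (P *m A) = \rank A.
Proof.
move=> uP; rewrite -mxrank_tr trmx_mul mxrankMfree ?mxrank_tr //.
by rewrite row_free_unit unitmx_tr.
Qed.

Lemma mxrank_col_row1 (F : fieldType) k c (X Y : 'M[F]_(k, c)) :
  \rank (col_mx (row_mx 1%:M X) (row_mx 1%:M Y)) = (k + \rank (Y - X)%R)%N.
Proof.
have -> : col_mx (row_mx 1%:M X) (row_mx 1%:M Y) =
          block_mx 1%:M 0 1%:M 1%:M *m
            (block_mx 1%:M 0 0 (Y - X) *m block_mx 1%:M X 0 1%:M).
  rewrite !mulmx_block !(mul1mx, mulmx1, mul0mx, mulmx0, addr0, add0r) block_mxEv.
  by rewrite addrC subrK.
rewrite mxrank_unit_mul; last by rewrite unitmxE det_lblock !det1 mulr1 unitr1.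
rewrite mxrankMfree; first by rewrite rank_diag_block_mx mxrank1.
by rewrite row_free_unit unitmxE det_ublock !det1 mulr1 unitr1.
Qed.

Lemma leq_card_bigcup (T I : finType) (P : pred I) (F : I -> {set T}) :
  (#|\bigcup_(i | P i) F i| <= \sum_(i | P i) #|F i|)%N.
Proof.
elim/big_rec2: _ => [|i B n _ IH]; first by rewrite cards0.
by apply: leq_trans (leq_card_setU _ _).1 _; rewrite leq_add2l.
Qed.

Section Gabidulin.

Variables (L : finFieldType) (q m p e : nat).
Hypotheses (p_prime : prime p) (qE : q = (p ^ e)%N) (cardL : #|L| = (q ^ m)%N).

Definition frob (s : nat) (x : L) : L := x ^+ (q ^ s).

Lemma pchar_L : p \in [pchar L].
Proof. by apply: (card_finPcharP (n := (e * m)%N)) => //; rewrite cardL qE expnM. Qed.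

Lemma pchar_nat_qX s : [pchar L].-nat (q ^ s)%N.
Proof. by rewrite qE -expnM pnatX (pnatE _ p_prime) pchar_L. Qed.

Fact frob_is_zmod_morphism s : zmod_morphism (frob s).
Proof.
by move=> x y; rewrite /frob exprDn_pchar ?exprNn_pchar ?pchar_nat_qX.
Qed.

Fact frob_is_monoid_morphism s : monoid_morphism (frob s).
Proof. by split=> [|x y]; [exact: expr1n | exact: exprMn]. Qed.

HB.instance Definition _ s :=
  GRing.isZmodMorphism.Build L L (frob s) (frob_is_zmod_morphism s).
HB.instance Definition _ s :=
  GRing.isMonoidMorphism.Build L L (frob s) (frob_is_monoid_morphism s).

Lemma frob0 (x : L) : frob 0 x = x.
Proof. by rewrite /frob expn0 expr1. Qed.

Lemma frobD a b (x : L) : frob a (frob b x) = frob (a + b) x.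
Proof. by rewrite /frob -exprM -expnD addnC. Qed.

Lemma frob_card (x : L) : frob m x = x.
Proof. by rewrite /frob -cardL expf_card. Qed.

Lemma frob_fixM s t (x : L) : frob s x = x -> frob (s * t) x = x.
Proof.
by move=> fx; elim: t => [|t IH]; rewrite ?muln0 ?frob0 // mulnS -frobD IH fx.
Qed.

Lemma frob_modn s (x : L) : frob s x = frob (s %% m) x.
Proof. by rewrite {1}(divn_eq s m) -frobD mulnC frob_fixM ?frob_card. Qed.

Lemma Fq_frob1 (x : L) : (x \in inFq q) = (frob 1 x == x).
Proof. by rewrite /frob expn1. Qed.

Fact Fq_subring_closed : subring_closed (@inFq L q).
Proof.
split=> [|x y|x y]; rewrite !Fq_frob1 ?rmorph1 // => /eqP fx /eqP fy.
  by rewrite rmorphB /= fx fy.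
by rewrite rmorphM /= fx fy.
Qed.

HB.instance Definition _ := GRing.isSubringClosed.Build L (@inFq L q) Fq_subring_closed.

Lemma frob_Fq s (x : L) : inFq q x -> frob s x = x.
Proof.
by rewrite -[inFq q x]/(x \in inFq q) Fq_frob1 -(mul1n s) => /eqP/frob_fixM->.
Qed.

Hypothesis m_gt0 : (0 < m)%N.

Lemma frob_fixed s (x : L) : coprime s m -> (frob s x == x) = inFq q x.
Proof.
move=> cop; rewrite -[inFq q x]/(x \in inFq q) Fq_frob1.
apply/eqP/eqP => [fx | f1x]; last by rewrite -(mul1n s) frob_fixM.
have [a _] := Bezoutr s m_gt0; rewrite (eqP cop) => /dvdnP[b Hb].
have fsa : frob (s * a) x = x by exact: frob_fixM.
by rewrite -{1}fsa frobD [(s * a)%N]mulnC Hb mulnC frob_fixM ?frob_card.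
Qed.

Lemma Fq_linindep_frob s N (g : 'I_N -> L) :
  Fq_linindep q g -> Fq_linindep q (fun j => frob s (g j)).
Proof.
move=> gi c cF sum0; apply: (gi c cF); apply: (fmorph_inj (frob s)).
rewrite rmorph0 -[RHS]sum0 rmorph_sum; apply: eq_bigr => j _.
by rewrite rmorphM /= frob_Fq.
Qed.

Lemma moore_annihilator_frobB s r N (g c : 'I_N -> L) :
  (forall i, (i < r.+1)%N -> \sum_j c j * frob (s * i) (g j) = 0) ->
  forall i, (i < r)%N ->
    \sum_j (frob s (c j) - c j) * frob (s * i) (frob s (g j)) = 0.
Proof.
move=> eqs i ir.
have shift j : frob (s * i) (frob s (g j)) = frob (s * i.+1) (g j).
  by rewrite frobD mulnS addnC.
under eq_bigr do rewrite shift mulrBl.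
have frob_eq : \sum_j frob s (c j) * frob (s * i.+1) (g j) = 0.
  transitivity (frob s (\sum_j c j * frob (s * i) (g j))).
    by rewrite rmorph_sum; apply: eq_bigr => j _; rewrite rmorphM /= frobD mulnS.
  by rewrite eqs ?rmorph0 // ltnW.
by rewrite sumrB frob_eq eqs ?subrr.
Qed.

Lemma moore_annihilator_eq0 s r N (g c : 'I_N -> L) :
  coprime s m -> Fq_linindep q g -> (#|[set j | c j != 0%R]| <= r)%N ->
  (forall i, (i < r)%N -> \sum_j c j * frob (s * i) (g j) = 0) ->
  forall j, c j = 0.
Proof.
(* Normalise c to be 1 at some j0; then d := frob s c - c annihilates one row
   fewer of the Moore matrix of frob s \o g and vanishes at j0, so d = 0 by
   induction: c has entries in F_q, and the first row contradicts independence. *)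
move=> cop; elim: r N g c => [|r IH] N g c gi supp eqs.
  move=> j; apply/eqP; apply: contraTT supp => cj.
  by rewrite -ltnNge card_gt0; apply/set0Pn; exists j; rewrite inE.
have [c0 j | ] := boolP [forall j, c j == 0]; first exact/eqP/(forallP c0).
rewrite negb_forall => /existsP[j0 cj0].
pose c' j := c j / c j0.
have eqs' i : (i < r.+1)%N -> \sum_j c' j * frob (s * i) (g j) = 0.
  by move=> ir; under eq_bigr do rewrite mulrAC; rewrite -mulr_suml eqs ?mul0r.
pose d j := frob s (c' j) - c' j.
have supp_d : (#|[set j | d j != 0%R]| <= r)%N.
  have sub : [set j | d j != 0] \subset [set j | c j != 0] :\ j0.
    apply/subsetP => j; rewrite !inE /d /c'; apply: contraR.
    rewrite negb_and !negbK => /orP[/eqP-> | /eqP->].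
      by rewrite divff // rmorph1 subrr.
    by rewrite mul0r rmorph0 subrr.
  apply: leq_trans (subset_leq_card sub) _.
  by move: supp; rewrite (cardsD1 j0) inE cj0 add1n ltnS.
have d0 := IH N _ d (Fq_linindep_frob (s := s) gi) supp_d
  (moore_annihilator_frobB eqs').
have c'F j : inFq q (c' j) by rewrite -(frob_fixed _ cop) -subr_eq0 [_ - _]d0.
suff : c' j0 = 0 by rewrite /c' divff // => /eqP; rewrite oner_eq0.
apply: (gi c' c'F); transitivity (\sum_j c' j * frob (s * 0) (g j)); last exact: eqs'.
by apply: eq_bigr => j _; rewrite muln0 frob0.
Qed.

Lemma Fq_linindep_comp N N' (g : 'I_N -> L) (f : 'I_N' -> 'I_N) :
  injective f -> Fq_linindep q g -> Fq_linindep q (fun t => g (f t)).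
Proof.
move=> f_inj gi d dF sum0.
pose d' x := \sum_(t | f t == x) d t.
have d'F x : inFq q (d' x) by apply: rpred_sum => t _; exact: dF.
have d'f t : d' (f t) = d t by rewrite /d' (big_pred1 t) // => t'; rewrite /= inj_eq.
have sum_d' : \sum_x d' x * g x = 0.
  rewrite -[RHS]sum0 [RHS](partition_big f predT) //=.
  by apply: eq_bigr => x _; rewrite mulr_suml; apply: eq_bigr => t /eqP->.
by move=> t; rewrite -d'f; apply: gi d'F sum_d' (f t).
Qed.

Lemma gabmx_row_free s r N (g : 'I_N -> L) :
  coprime s m -> Fq_linindep q g -> (r <= N)%N -> row_free (gabmx q s r g).
Proof.
move=> cop gi rN; set G := gabmx q s r g.
pose M := colsub (widen_ord rN) G.
have M_free : row_free M.
  rewrite /row_free -mxrank_tr; apply/inj_row_free => w wM0.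
  have widen_inj : injective (widen_ord rN) by move=> a b [] /val_inj.
  apply/rowP => j; rewrite mxE.
  apply: (moore_annihilator_eq0 (r := r) cop (Fq_linindep_comp widen_inj gi))
    => [|i ir].
    by rewrite (leq_trans (max_card _)) ?card_ord.
  transitivity ((w *m M^T) 0 (Ordinal ir)); last by rewrite wM0 mxE.
  by rewrite mxE; apply: eq_bigr => l _; rewrite !mxE.
apply/inj_row_free => v vG0; apply: (row_free_inj M_free).
by rewrite mul0mx mulmx_colsub vG0; apply/matrixP => i j; rewrite !mxE.
Qed.

Lemma Fq_linindep_shear N (g : 'I_N -> L) (i0 j0 : 'I_N) (x : L) :
  i0 != j0 -> inFq q x -> Fq_linindep q g ->
  Fq_linindep q (fun y => if y == j0 then g j0 - x * g i0 else g y).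
Proof.
move=> ne xF gi d dF sum0.
pose d' y := if y == i0 then d i0 - d j0 * x else d y.
have d'F y : d' y \in inFq q.
  by rewrite /d'; case: ifP => _; rewrite ?rpredB ?rpredM //;
    solve [apply: dF | apply: xF].
have sum_d' : \sum_y d' y * g y = \sum_y d y * g y - d j0 * x * g i0.
  rewrite (bigD1 i0) //= /d' eqxx [X in _ = X - _](bigD1 i0) //=.
  by under eq_bigr => y yi0 do rewrite (negbTE yi0); ring.
have sum_d : \sum_y d y * (if y == j0 then g j0 - x * g i0 else g y) =
             \sum_y d y * g y - d j0 * x * g i0.
  rewrite (bigD1 j0) //= eqxx [X in _ = X - _](bigD1 j0) //=.
  by under eq_bigr => y yj0 do rewrite (negbTE yj0); ring.
have d'0 := gi d' d'F (etrans sum_d' (etrans (esym sum_d) sum0)).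
have dj0 : d j0 = 0 by rewrite -(d'0 j0) /d' eq_sym (negbTE ne).
move=> y; case: (eqVneq y i0) => [->|yi0].
  by have := d'0 i0; rewrite /d' eqxx dj0 mul0r subr0.
by rewrite -(d'0 y) /d' (negbTE yi0).
Qed.

Definition linpoly_eval s k (a : 'rV[L]_k) (x : L) : L :=
  \sum_(l < k) a 0 l * frob (s * l) x.

Lemma linpoly_eval0 s k (x : L) : linpoly_eval s (0 : 'rV_k) x = 0.
Proof. by rewrite /linpoly_eval big1 // => l _; rewrite mxE mul0r. Qed.

Lemma gabmx_mulE s k N (a : 'rV[L]_k) (g : 'I_N -> L) j :
  (a *m gabmx q s k g) 0 j = linpoly_eval s a (g j).
Proof. by rewrite mxE; apply: eq_bigr => l _; rewrite mxE. Qed.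

Lemma linpoly_evalBZ s k (a : 'rV[L]_k) (x y z : L) : inFq q x ->
  linpoly_eval s a (y - x * z) = linpoly_eval s a y - x * linpoly_eval s a z.
Proof.
move=> xF; rewrite /linpoly_eval mulr_sumr -sumrB; apply: eq_bigr => l _.
by rewrite rmorphB rmorphM /= (frob_Fq _ xF); ring.
Qed.

Lemma linpoly_eval_eq0 s k (a : 'rV[L]_k) (h : 'I_k -> L) :
  coprime s m -> Fq_linindep q h -> (forall t, linpoly_eval s a (h t) = 0) -> a = 0.
Proof.
move=> cop hi ah0; apply: (row_free_inj (gabmx_row_free cop hi (leqnn k))).
by rewrite mul0mx; apply/rowP => t; rewrite gabmx_mulE ah0 mxE.
Qed.

Lemma gabmx_addsmx_frob s k N (g : 'I_N -> L) : (0 < k)%N ->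
  (gabmx q s k g + map_mx (frob s) (gabmx q s k g) :=: gabmx q s k.+1 g)%MS.
Proof.
move=> k_gt0; set G := gabmx q s k g; set G' := gabmx q s k.+1 g.
have G_row i : row i G = row (widen_ord (leqnSn k) i) G'.
  by apply/rowP => j; rewrite !mxE.
have frobG_row i : row i (map_mx (frob s) G) = row (lift ord0 i) G'.
  by apply/rowP => j; rewrite !mxE /frob -exprM -expnD lift0 mulnS addnC.
apply/eqmxP/andP; split.
  by rewrite addsmx_sub; apply/andP; split; apply/row_subP => i;
    rewrite ?G_row ?frobG_row row_sub.
apply/row_subP => i; case: (unliftP ord0 i) => [j ->|->].
  by rewrite -frobG_row (submx_trans (row_sub _ _) (addsmxSr _ _)).
have -> : row ord0 G' = row (Ordinal k_gt0) G by apply/rowP => j; rewrite !mxE.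
exact: submx_trans (row_sub _ _) (addsmxSl _ _).
Qed.

Lemma gabidulin_rank_frobB s k c (X : 'M[L]_(k, c)) (g : 'I_(k + c) -> L) :
  (0 < k)%N -> (0 < c)%N -> coprime s m -> Fq_linindep q g ->
  (row_mx 1%:M X == gabmx q s k g)%MS -> \rank (map_mx (frob s) X - X) = 1%N.
Proof.
move=> k_gt0 c_gt0 cop gi CG; set C := row_mx 1%:M X.
have CsE : map_mx (frob s) C = row_mx 1%:M (map_mx (frob s) X).
  by rewrite map_row_mx map_mx1.
have CsG : (map_mx (frob s) C == map_mx (frob s) (gabmx q s k g))%MS.
  by rewrite !map_submx.
(* C + C^(q^s) is the row space of the Moore matrix with k + 1 rows. *)
have rank_sum : \rank (C + map_mx (frob s) C)%MS = k.+1.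
  rewrite (adds_eqmx (eqmxP CG) (eqmxP CsG)) gabmx_addsmx_frob //.
  by apply/eqP/gabmx_row_free; rewrite // -addn1 leq_add2l.
have := mxrank_col_row1 X (map_mx (frob s) X).
by rewrite -CsE -addsmxE rank_sum -addn1 => /eqP; rewrite eqn_add2l => /eqP <-.
Qed.

Lemma gabidulin_entries_notin_Fq s k c (X : 'M[L]_(k, c)) (g : 'I_(k + c) -> L) :
  coprime s m -> Fq_linindep q g -> (row_mx 1%:M X <= gabmx q s k g)%MS ->
  forall i j, ~~ inFq q (X i j).
Proof.
move=> cop gi CG i j; apply/negP => XF; set x := X i j.
have [a rowE] := submxP (submx_trans (row_sub i _) CG).
have aE y : linpoly_eval s a (g y) = row_mx 1%:M X i y.
  by rewrite -gabmx_mulE -rowE mxE.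
(* Row i of C would vanish, as a linearized polynomial, at the k independent
   elements g (lshift t) (t != i) and g (rshift j) - x * g (lshift i). *)
pose g' y := if y == rshift k j then g (rshift k j) - x * g (lshift c i) else g y.
pose f t := if t == i then rshift k j else lshift c t.
have f_inj : injective f.
  move=> t1 t2; rewrite /f.
  by do 2![case: eqP => [->|_]] => // /eqP; rewrite ?eq_shift // => /eqP.
have hi : Fq_linindep q (fun t => g' (f t)).
  by apply: Fq_linindep_comp f_inj (Fq_linindep_shear _ XF gi); rewrite eq_shift.
suff a0 : a = 0.
  have := aE (lshift c i); rewrite a0 linpoly_eval0 row_mxEl mxE eqxx.
  by move=> /esym/eqP; rewrite oner_eq0.
apply: linpoly_eval_eq0 cop hi _ => t.
case: (eqVneq t i) => [->|ti]; rewrite /g' /f.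
  by rewrite !eqxx linpoly_evalBZ // !aE row_mxEr row_mxEl mxE eqxx mulr1 subrr.
by rewrite (negbTE ti) eq_shift aE row_mxEl mxE eq_sym (negbTE ti).
Qed.

Lemma gen_gabidulin_Gset k c (X : 'M[L]_(k, c)) :
  (0 < k)%N -> (0 < c)%N -> (1 < m)%N ->
  is_gen_gabidulin q m (row_mx 1%:M X) ->
  exists2 s : 'I_m, (0 < s)%N && coprime s m & X \in Gset L q s k c.
Proof.
move=> k_gt0 c_gt0 m_gt1 [s [g [cop [gi CG]]]].
exists (Ordinal (ltn_pmod s m_gt0)) => /=.
  rewrite coprime_modl cop andbT lt0n; apply: contraTneq cop => /eqP/gcdn_idPr.
  by rewrite /coprime => ->; rewrite gtn_eqF.
have frobmxE : frobmx q (s %% m) X = map_mx (frob s) X.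
  by apply/matrixP => i j; rewrite !mxE frob_modn.
rewrite inE frobmxE (gabidulin_rank_frobB k_gt0 c_gt0 cop gi CG) eqxx andbT.
have [CsubG _] := andP CG.
apply/forallP => i; apply/forallP => j.
exact: gabidulin_entries_notin_Fq cop gi CsubG i j.
Qed.

End Gabidulin.

Theorem lemma4p7 (L : finFieldType) (q m k n : nat) :
  (exists p e : nat, [/\ prime p, (0 < e)%N & q = (p ^ e)%N]) ->
  #|L| = (q ^ m)%N ->
  (2 <= m)%N -> (1 <= k)%N -> (k < n)%N ->
  Pr [set X : 'M[L]_(k, n - k) |
        `[< is_gen_gabidulin q m (row_mx (1%:M : 'M[L]_k) X) >]]
    <= \sum_(s < m | (0 < s)%N && coprime s m) Pr (Gset L q s k (n - k))
  /\ \sum_(s < m | (0 < s)%N && coprime s m) Pr (Gset L q s k (n - k))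
     = \sum_(s < m | (0 < s)%N && coprime s m)
         (#|Gset L q s k (n - k)|%:R / (q ^ (m * k * (n - k)))%N%:R : rat).
Proof.
move=> [p [e [p_prime _ qE]]] cardL m_gt1 k_gt0 kn.
have cardT : #|{: 'M[L]_(k, n - k)}| = (q ^ (m * k * (n - k)))%N.
  by rewrite card_mx cardL -expnM mulnA.
split; last by apply: eq_bigr => s _; rewrite /Pr cardT.
set A := [set X | _].
have A_sub : A \subset \bigcup_(s < m | (0 < s)%N && coprime s m) Gset L q s k (n - k).
  apply/subsetP => X; rewrite inE => /asboolP gab; apply/bigcupP.
  have nk_gt0 : (0 < n - k)%N by rewrite subn_gt0.
  have [s s_ok XG] := gen_gabidulin_Gset p_prime qE cardL (ltnW m_gt1)
    k_gt0 nk_gt0 m_gt1 gab.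
  by exists s.
rewrite /Pr -mulr_suml -natr_sum ler_wpM2r ?invr_ge0 ?ler0n // ler_nat.
exact: leq_trans (subset_leq_card A_sub) (leq_card_bigcup _ _).
Qed.
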